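(* Let $a_0<a_1<\dots<a_n$ be positive integers with $\gcd(a_0,\dots,a_n)=1$ and let $t\in\mathbb{Z}_{\ge0}$. If the equation $a_0x_0+a_1x_1+\dots+a_nx_n=t$ has a solution $x\in\mathbb{Z}_{\ge 0}^{n+1}$, then it has a solution $x\in\mathbb{Z}_{\ge0}^{n+1}$ with $$\prod_{i=1}^n (x_i+1)\le a_0 .$$ *)

From mathcomp Require Import all_boot.

From mathcomp Require Import all_boot zify.

(* Take a solution x with x_0 maximal and, among those, prod_(i>0) (x_i + 1)
   minimal.  If this product exceeds a_0, two distinct vectors y, y' with
   0 <= y, y' <= x and y_0 = y'_0 = 0 have a.y = a.y' (mod a_0); say
   a.y >= a.y'.  Then x - y + y', with (a.y - a.y') / a_0 added to x_0, is
   again a solution.  If the quotient is positive x_0 grows; otherwise both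
   x - y + y' and x - y' + y are solutions, and since
   (x_i - y_i + y'_i + 1)(x_i - y'_i + y_i + 1) = (x_i + 1)^2 - (y_i - y'_i)^2,
   one of them has a smaller product. *)

Lemma lex_descent (T : Type) (S Q : T -> Prop) (f g : T -> nat) :
  (forall x, S x ->
     Q x \/ exists2 y, S y & f y < f x \/ f y = f x /\ g y < g x) ->
  forall x, S x -> exists2 y, S y & Q y.
Proof.
move=> descent x Sx.
suff: forall m k z, f z < m -> g z < k -> S z -> exists2 y, S y & Q y.
  by move/(_ (f x).+1 (g x).+1 x); apply.
elim=> // m IHm; elim=> // k IHk z fz gz Sz.
have [Qz | [y Sy [fy | [fy gy]]]] := descent z Sz; first by exists z.
- by apply: (IHm (g y).+1 y) => //; lia.
- by apply: (IHk y) => //; lia.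
Qed.

Lemma ltn_prod (I : finType) (P : pred I) (F G : I -> nat) (j : I) :
  P j -> F j < G j -> (forall i, P i -> F i <= G i) -> (forall i, P i -> 0 < G i) ->
  \prod_(i | P i) F i < \prod_(i | P i) G i.
Proof.
move=> Pj ltFGj leFG G_gt0; rewrite (bigD1 j) //= [X in _ < X](bigD1 j) //=.
apply: ltn_mull => //; last by apply: leq_prod => i /andP[/leFG].
by apply: prodn_cond_gt0 => i /andP[/G_gt0].
Qed.

Lemma exchange_mul_leqif {x y y' : nat} : y <= x -> y' <= x ->
  (x - y + y').+1 * (x - y' + y).+1 <= x.+1 * x.+1 ?= iff (y == y').
Proof.
move=> le_yx le_y'x; have := nat_AGM2 (x - y + y').+1 (x - y' + y).+1.
have -> : (x - y + y').+1 + (x - y' + y).+1 = 2 * x.+1 by lia.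
rewrite expnMn -mulnn; case=> le4 eq4; split.
  by rewrite -(leq_pmul2l (isT : 0 < 4)).
by rewrite -(eqn_pmul2l (isT : 0 < 4)) eq4; apply/eqP/eqP; lia.
Qed.

Section Exchange.

Variables (I : finType) (a : I -> nat) (i0 : I).
Hypothesis a0_gt0 : 0 < a i0.

Definition weight (x : I -> nat) := \sum_i a i * x i.

Definition box (x : I -> nat) := \prod_(i | i != i0) (x i).+1.

Definition cut (x : I -> nat) i := if i == i0 then 0 else x i.

Definition exchange (x y y' : I -> nat) i := x i - y i + y' i.

Lemma leq_weight x i : a i * x i <= weight x.
Proof. by rewrite /weight (bigD1 i) //= leq_addr. Qed.

Lemma weight_exchange x y y' : (forall i, y i <= x i) ->
  weight (exchange x y y') + weight y = weight x + weight y'.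
Proof.
move=> le_yx; rewrite /weight -!big_split /=; apply: eq_bigr => i _.
by rewrite /exchange; have := le_yx i; nia.
Qed.

Lemma weight_bump x q :
  weight (fun i => x i + (i == i0) * q) = weight x + a i0 * q.
Proof.
rewrite /weight -(big_pred1_eq addn i0 (fun i => a i * q)) big_mkcond -big_split /=.
by apply: eq_bigr => i _; case: eqP => [->|_]; rewrite ?mul1n ?mul0n; lia.
Qed.

Lemma cut_le x i : cut x i <= x i.
Proof. by rewrite /cut; case: eqP. Qed.

Lemma cut_pivot {x m} : m <= cut x i0 -> m = 0.
Proof. by rewrite /cut eqxx leqn0 => /eqP. Qed.

Lemma box_exchange_lt {x y y' j} :
  (forall i, y i <= cut x i) -> (forall i, y' i <= cut x i) -> y j != y' j ->
  box (exchange x y y') * box (exchange x y' y) < box x * box x.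
Proof.
move=> le_y le_y' ne_yj.
have le_yx i : y i <= x i := leq_trans (le_y i) (cut_le x i).
have le_y'x i : y' i <= x i := leq_trans (le_y' i) (cut_le x i).
have ne_j : j != i0.
  by apply: contraNneq ne_yj => ->; rewrite (cut_pivot (le_y i0)) (cut_pivot (le_y' i0)).
rewrite /box /exchange -!big_split /=; apply: (@ltn_prod _ _ _ _ j) => [//||i _|i _] //.
- by rewrite (ltn_leqif (exchange_mul_leqif (le_yx j) (le_y'x j))) ne_yj.
- exact: exchange_mul_leqif (le_yx i) (le_y'x i).
Qed.

Lemma card_dffun_cut x : #|{dffun forall i, 'I_(cut x i).+1}| = box x.
Proof.
rewrite card_dep_ffun foldrE big_map big_enum /= (bigD1 i0) //=.
rewrite card_ord {1}/cut eqxx mul1n.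
by apply: eq_bigr => i /negPf ne_i; rewrite card_ord /cut ne_i.
Qed.

Lemma congruent_subvectors x : a i0 < box x ->
  exists j (y y' : I -> nat),
    [/\ forall i, y i <= cut x i, forall i, y' i <= cut x i, y j != y' j,
        weight y' <= weight y & weight y = weight y' %[mod a i0]].
Proof.
move=> lt_a0_box.
pose vec (f : {dffun forall i, 'I_(cut x i).+1}) i : nat := f i.
pose res f : 'I_(a i0) := Ordinal (ltn_pmod (weight (vec f)) a0_gt0).
have : ~~ injectiveb res.
  by apply/injectiveP => /leq_card; rewrite card_ord card_dffun_cut; lia.
case/injectivePn => f [f' ne_ff' /(congr1 val) /= eq_mod].
have [j ne_j] : exists j, vec f j != vec f' j.
  apply/existsP; apply: contraR ne_ff' => /existsPn eq_ff'.
  by apply/eqP/ffunP => i; apply/val_inj/eqP; rewrite -[_ == _]negbK eq_ff'.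
have le_vec g i : vec g i <= cut x i := ltnSE (ltn_ord (g i)).
case: (leqP (weight (vec f')) (weight (vec f))) => [le_w | /ltnW le_w].
- by exists j, (vec f), (vec f').
- by exists j, (vec f'), (vec f); rewrite eq_sym.
Qed.

Lemma box_descent x : a i0 < box x ->
  exists2 x', weight x' = weight x & x i0 < x' i0 \/ x' i0 = x i0 /\ box x' < box x.
Proof.
move=> /congruent_subvectors[j [y [y' [le_y le_y' ne_yj le_w eq_mod]]]].
have le_yx i : y i <= x i by apply: leq_trans (le_y i) (cut_le x i).
have le_y'x i : y' i <= x i by apply: leq_trans (le_y' i) (cut_le x i).
have exchange_pivot z z' : z i0 <= cut x i0 -> z' i0 <= cut x i0 ->
    exchange x z z' i0 = x i0.
  by rewrite /exchange => /cut_pivot-> /cut_pivot->; rewrite subn0 addn0.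
have w_xyy' := @weight_exchange x y y' le_yx.
have w_xy'y := @weight_exchange x y' y le_y'x.
case: (ltngtP (weight y') (weight y)) le_w => // [lt_w _ | eq_w _].
- have [q def_q] : exists q, weight y - weight y' = q * a i0.
    by apply/dvdnP; rewrite -eqn_mod_dvd ?eq_mod // ltnW.
  exists (fun i => exchange x y y' i + (i == i0) * q).
    by rewrite weight_bump; nia.
  by left; rewrite eqxx mul1n exchange_pivot //; nia.
- have lt_prod := box_exchange_lt le_y le_y' ne_yj.
  have [lt_box | le_box] := ltnP (box (exchange x y y')) (box x).
    by exists (exchange x y y'); [lia | right; rewrite exchange_pivot].
  have [lt_box' | le_box'] := ltnP (box (exchange x y' y)) (box x).
    by exists (exchange x y' y); [lia | right; rewrite exchange_pivot].
  by have := leq_mul le_box le_box'; lia.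
Qed.

Lemma exists_small_box x : exists2 x', weight x' = weight x & box x' <= a i0.
Proof.
apply: (@lex_descent _ (fun x' => weight x' = weight x) _
  (fun x' => weight x - x' i0) box) => //.
move=> x' w_x'; have [|/box_descent[x'' w_x'' grow]] := leqP (box x') (a i0).
  by left.
right; exists x''; first by rewrite w_x''.
have := leq_weight x'' i0; rewrite w_x'' w_x'; have := leq_weight x' i0; rewrite w_x'.
by case: grow => [|[->]]; nia.
Qed.

End Exchange.

Theorem lemma1 (n : nat) (a : 'I_n.+1 -> nat) (t : nat)
  (hpos : forall i, 0 < a i)
  (hinc : forall i j : 'I_n.+1, (i < j)%N -> (a i < a j)%N)
  (hgcd : \big[gcdn/0]_(i < n.+1) a i = 1)
  (hsol : exists x : 'I_n.+1 -> nat, \sum_(i < n.+1) a i * x i = t) :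
  exists x : 'I_n.+1 -> nat,
    \sum_(i < n.+1) a i * x i = t /\
    (\prod_(i < n.+1 | (0 < i)%N) (x i).+1 <= a ord0)%N.
Proof.
have [x sol_x] := hsol.
have [x' w_x' small] := @exists_small_box _ a ord0 (hpos ord0) x.
exists x'; split; first by rewrite -sol_x.
by rewrite (eq_bigl (fun i => i != ord0)) // => i; rewrite lt0n.
Qed.
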